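(* Let $\mathbf a=(a_1,\ldots,a_n)\in\mathbb Z_{\geq1}^n$ and $\mathbf b=(b_1,\ldots,b_m)\in\mathbb Z_{\geq1}^m$. Every minimal solution $(\mathbf x,\mathbf y)$ of $x_1a_1+\cdots+x_na_n=y_1b_1+\cdots+y_mb_m$ is a convex combination of $\mathbf 0\in\mathbb R^{n+m}$ and the generators $\mathbf g_{i,j}$ ($1\leq i\leq n$, $1\leq j\leq m$). Moreover, one can use at most $m+n-1$ nonzero generators in any such combination (i.e., there is such a convex combination in which at most $m+n-1$ generators have nonzero coefficient).
   Context: A solution is a pair $(\mathbf x,\mathbf y)\in\mathbb Z_{\geq0}^n\times\mathbb Z_{\geq0}^m$ with $\sum_i x_ia_i=\sum_j y_jb_j$; it is minimal if it is nonzero and cannot be written as the sum of two nonzero solutions. Let $\mathbf e_k$ be the $k$th standard unit vector of $\mathbb R^{n+m}$. For $1\leq i\leq n$, $1\leq j\leq m$, the generator $\mathbf g_{i,j}=b_j\mathbf e_i+a_i\mathbf e_{n+j}$ is the solution whose only nonzero coordinates are $x_i=b_j$ and $y_j=a_i$. *)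

From mathcomp Require Import all_boot all_order all_algebra.
Set Implicit Arguments. Unset Strict Implicit. Unset Printing Implicit Defensive.
Import Order.TTheory GRing.Theory Num.Theory.

Definition is_solution (n m : nat) (a : 'I_n -> nat) (b : 'I_m -> nat)
  (x : 'I_n -> nat) (y : 'I_m -> nat) : Prop :=
  (\sum_(i < n) x i * a i)%N = (\sum_(j < m) y j * b j)%N.

Definition is_zero_sol (n m : nat) (x : 'I_n -> nat) (y : 'I_m -> nat) : Prop :=
  (forall i, x i = 0%N) /\ (forall j, y j = 0%N).

Definition minimal_solution (n m : nat) (a : 'I_n -> nat) (b : 'I_m -> nat)
  (x : 'I_n -> nat) (y : 'I_m -> nat) : Prop :=
  is_solution a b x y /\ ~ is_zero_sol x y /\
  ~ (exists (x1 x2 : 'I_n -> nat) (y1 y2 : 'I_m -> nat),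
        is_solution a b x1 y1 /\ is_solution a b x2 y2 /\
        ~ is_zero_sol x1 y1 /\ ~ is_zero_sol x2 y2 /\
        (forall i, x i = (x1 i + x2 i)%N) /\ (forall j, y j = (y1 j + y2 j)%N)).

From mathcomp Require Import all_boot all_order all_algebra.
From mathcomp Require Import zify.
Import Order.TTheory GRing.Theory Num.Theory.
Set Implicit Arguments. Unset Strict Implicit. Unset Printing Implicit Defensive.

(* List the x_i copies of each a_i as a sequence, and the y_j copies of each
   b_j as another; both sum to S = sum_i x_i a_i.  If P_k and Q_l are their
   prefix sums, the residues P_k - Q_l mod S are pairwise distinct: a collision
   would make a block of the first sequence sum to the same value as a block
   (possibly wrapping around) of the second, which is a proper subsolution.
   Hence (sum_i x_i) (sum_j y_j) <= S, so the coefficients x_i y_j / S express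
   (x, y) as a combination of the g_ij of total weight at most 1.  All g_ij lie
   in the hyperplane orthogonal to (a, -b), of dimension n + m - 1, and a conic
   Caratheodory reduction, which never increases the total weight, shrinks the
   support to at most n + m - 1 generators. *)

Section Multisets.

Variable T : finType.

Lemma big_count_mem (w : T -> nat) (s : seq T) :
  \sum_(t <- s) w t = \sum_t count_mem t s * w t.
Proof.
elim: s => [|u s IHs]; first by rewrite big_nil big1.
rewrite big_cons IHs; under [RHS]eq_bigr do rewrite /= mulnDl.
rewrite big_split /=; congr (_ + _).
by rewrite (bigD1 u) //= eqxx mul1n big1 ?addn0 // => t; rewrite eq_sym => /negbTE ->.
Qed.

Definition mseq (x : T -> nat) : seq T := flatten [seq nseq (x t) t | t <- enum T].

Lemma count_mem_mseq (x : T -> nat) t : count_mem t (mseq x) = x t.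
Proof.
rewrite count_flatten -map_comp sumnE big_map big_enum /=.
under eq_bigr do rewrite count_nseq /=.
by rewrite (bigD1 t) //= eqxx mul1n big1 ?addn0 // => u; rewrite eq_sym => /negbTE ->.
Qed.

Lemma big_mseq (x w : T -> nat) : \sum_(t <- mseq x) w t = \sum_t x t * w t.
Proof. by rewrite big_count_mem; apply: eq_bigr => t _; rewrite count_mem_mseq. Qed.

Lemma size_mseq (x : T -> nat) : size (mseq x) = \sum_t x t.
Proof. by rewrite -sum1_size big_mseq; under eq_bigr do rewrite muln1. Qed.

End Multisets.

Section PrefixSums.

Variables (T : Type) (w : T -> nat) (s : seq T).

Lemma sum_take_cat k k' : k <= k' ->
  \sum_(t <- take k' s) w t = \sum_(t <- take k s) w t + \sum_(t <- drop k (take k' s)) w t.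
Proof. by move=> le_kk'; rewrite -big_cat -{1}(take_takel s le_kk') cat_take_drop. Qed.

Lemma sum_take_drop k :
  \sum_(t <- take k s) w t + \sum_(t <- drop k s) w t = \sum_(t <- s) w t.
Proof. by rewrite -big_cat cat_take_drop. Qed.

Hypothesis w_gt0 : forall t, 0 < w t.

Lemma ltn_sum_take k k' : k' <= size s ->
  (\sum_(t <- take k s) w t < \sum_(t <- take k' s) w t) = (k < k').
Proof.
move=> le_k's; case: (ltnP k k') => [lt_kk' | le_k'k]; last first.
  by apply: negbTE; rewrite -leqNgt (sum_take_cat le_k'k) leq_addr.
rewrite (sum_take_cat (ltnW lt_kk')) -[X in X < _]addn0 ltn_add2l.
have : 0 < size (drop k (take k' s)) by rewrite size_drop size_takel // subn_gt0.
by case: (drop k _) => [//| u r _]; rewrite big_cons addn_gt0 (w_gt0 u).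
Qed.

Lemma sum_take_inj k k' : k <= size s -> k' <= size s ->
  \sum_(t <- take k s) w t = \sum_(t <- take k' s) w t -> k = k'.
Proof.
move=> le_ks le_k's eq_sum; case: (ltngtP k k') => // lt_k.
  by move: (ltn_sum_take k le_k's); rewrite eq_sum ltnn lt_k.
by move: (ltn_sum_take k' le_ks); rewrite eq_sum ltnn lt_k.
Qed.

Lemma sum_take_lt_sum k : k < size s -> \sum_(t <- take k s) w t < \sum_(t <- s) w t.
Proof. by move=> lt_ks; rewrite -{2}(take_size s) ltn_sum_take. Qed.

End PrefixSums.

Lemma eq_modn_cases d A B : A < 2 * d -> B < 2 * d -> A = B %[mod d] ->
  A = B \/ A = B + d \/ B = A + d.
Proof.
have [->|d_gt0] := posnP d; first by rewrite muln0.
move=> ltA ltB eq_mod.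
have : A %/ d < 2 by rewrite ltn_divLR // mulnC.
have : B %/ d < 2 by rewrite ltn_divLR // mulnC.
move: (divn_eq A d) (divn_eq B d); rewrite eq_mod.
by case: (A %/ d) => [|[|]] //; case: (B %/ d) => [|[|]] //; lia.
Qed.

Section MinimalSolution.

Variables (n m : nat) (a : 'I_n -> nat) (b : 'I_m -> nat).
Hypotheses (a_gt0 : forall i, 0 < a i) (b_gt0 : forall j, 0 < b j).
Variables (x : 'I_n -> nat) (y : 'I_m -> nat).
Hypothesis xy_min : minimal_solution a b x y.

Let S : nat := \sum_(i < n) x i * a i.

Lemma minimal_solution_gt0 : 0 < S.
Proof.
have [xy_sol [xy_neq0 _]] := xy_min.
rewrite lt0n; apply: contra_notN xy_neq0 => /eqP S0; split=> [i|j].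
  have : x i * a i <= S by rewrite /S (bigD1 i) //= leq_addr.
  by rewrite S0 leqn0 muln_eq0 (eqn0Ngt (a i)) a_gt0 orbF => /eqP.
have : y j * b j <= S by rewrite /S xy_sol (bigD1 j) //= leq_addr.
by rewrite S0 leqn0 muln_eq0 (eqn0Ngt (b j)) b_gt0 orbF => /eqP.
Qed.

Lemma minimal_solution_exists_x_gt0 : exists i, 0 < x i.
Proof.
apply/existsP; apply: contraTT minimal_solution_gt0; rewrite negb_exists => /forallP x0.
by rewrite /S big1 // => i _; move: (x0 i); rewrite -eqn0Ngt => /eqP ->.
Qed.

Lemma minimal_solution_no_proper_subsolution x' y' :
  (forall i, x' i <= x i) -> (forall j, y' j <= y j) -> is_solution a b x' y' ->
  0 < \sum_i x' i * a i < S -> False.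
Proof.
move=> le_x' le_y' sol' /andP[pos lt]; have [sol [_ indecomposable]] := xy_min.
apply: indecomposable; exists x', (fun i => x i - x' i), y', (fun j => y j - y' j).
have split_x : S = \sum_i x' i * a i + \sum_i (x i - x' i) * a i.
  by rewrite /S -big_split; apply: eq_bigr => i _ /=; rewrite -mulnDl subnKC.
have split_y : \sum_j y j * b j = \sum_j y' j * b j + \sum_j (y j - y' j) * b j.
  by rewrite -big_split; apply: eq_bigr => j _ /=; rewrite -mulnDl subnKC.
have nonzero u v : 0 < \sum_i u i * a i -> ~ is_zero_sol u v.
  by move=> + [u0 _]; rewrite big1 // => i _; rewrite u0.
do ![split] => //.
- by move: sol; rewrite /is_solution -/S split_x split_y sol' => /addnI.
- exact: nonzero.
- by apply: nonzero; move: lt; rewrite split_x; lia.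
- by move=> i; rewrite subnKC.
- by move=> j; rewrite subnKC.
Qed.

Let tx : seq 'I_n := mseq x.
Let ty : seq 'I_m := mseq y.

Lemma no_proper_subseq_solution (s1 : seq 'I_n) (s2 : seq 'I_m) :
  subseq s1 tx -> subseq s2 ty -> \sum_(t <- s1) a t = \sum_(t <- s2) b t ->
  0 < \sum_(t <- s1) a t < S -> False.
Proof.
move=> sub1 sub2 eq_sum; rewrite big_count_mem.
apply: (minimal_solution_no_proper_subsolution (y' := fun j => count_mem j s2)).
- by move=> i; rewrite -(count_mem_mseq x i) leq_count_subseq.
- by move=> j; rewrite -(count_mem_mseq y j) leq_count_subseq.
- by rewrite /is_solution -!big_count_mem.
Qed.

Local Notation P k := (\sum_(t <- take k tx) a t).
Local Notation Q l := (\sum_(t <- take l ty) b t).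

Lemma sum_mseq_y : \sum_(t <- ty) b t = S.
Proof. by rewrite big_mseq /S xy_min.1. Qed.

Lemma prefix_x_lt k : k < size tx -> P k < S.
Proof. by move=> lt_k; rewrite -[S]big_mseq sum_take_lt_sum. Qed.

Lemma prefix_y_lt l : l < size ty -> Q l < S.
Proof. by move=> lt_l; rewrite -sum_mseq_y sum_take_lt_sum. Qed.

Lemma prefix_sums_eq k k' l l' : k <= k' -> k' < size tx -> l < size ty -> l' < size ty ->
  P k' + Q l = P k + Q l' -> k = k' /\ l = l'.
Proof.
move=> le_kk' lt_k' lt_l lt_l' eq_sums.
have [lt_kk' | lt_k'k | eq_kk'] := ltngtP k k'.
- exfalso; have lt_Pk' := prefix_x_lt lt_k'.
  have lt_Pkk' : P k < P k' by rewrite (ltn_sum_take a_gt0 k (ltnW lt_k')).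
  have lt_ll' : l < l' by rewrite -(ltn_sum_take b_gt0 l (ltnW lt_l')); lia.
  have := sum_take_cat a tx le_kk'; have := sum_take_cat b ty (ltnW lt_ll').
  move=> Qll' Pkk'.
  apply: (no_proper_subseq_solution (s1 := drop k (take k' tx)) (s2 := drop l (take l' ty))).
  + exact: subseq_trans (drop_subseq _ _) (take_subseq _ _).
  + exact: subseq_trans (drop_subseq _ _) (take_subseq _ _).
  + lia.
  + lia.
- by move: le_kk'; rewrite leqNgt lt_k'k.
- split=> //; apply: (sum_take_inj b_gt0 (ltnW lt_l) (ltnW lt_l')).
  by move: eq_sums; rewrite eq_kk' => /addnI.
Qed.

Lemma prefix_sums_no_wrap k k' l l' : k' < size tx -> l < size ty ->
  P k' + Q l = P k + Q l' + S -> False.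
Proof.
move=> lt_k' lt_l eq_sums; have lt_Pk' := prefix_x_lt lt_k'; have lt_Ql := prefix_y_lt lt_l.
have lt_kk' : k < k' by rewrite -(ltn_sum_take a_gt0 k (ltnW lt_k')); lia.
have lt_l'l : l' < l by rewrite -(ltn_sum_take b_gt0 l' (ltnW lt_l)); lia.
have := sum_take_cat a tx (ltnW lt_kk'); have := sum_take_drop b ty l.
rewrite sum_mseq_y => Qll' Pkk'.
apply: (no_proper_subseq_solution (s1 := drop k (take k' tx)) (s2 := take l' ty ++ drop l ty)).
- exact: subseq_trans (drop_subseq _ _) (take_subseq _ _).
- rewrite -[X in subseq _ X](cat_take_drop l' ty) cat_subseq //.
  by rewrite -(subnK (ltnW lt_l'l)) -drop_drop drop_subseq.
- rewrite big_cat /=; lia.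
- lia.
Qed.

Lemma minimal_solution_sum_mul_sum_le : (\sum_i x i) * (\sum_j y j) <= S.
Proof.
rewrite -(size_mseq x) -(size_mseq y).
pose f (p : 'I_(size tx) * 'I_(size ty)) : 'I_S :=
  Ordinal (ltn_pmod (P p.1 + (S - Q p.2)) minimal_solution_gt0).
suff f_inj : injective f by have := leq_card f f_inj; rewrite card_prod !card_ord.
move=> [k l] [k' l'] /(congr1 val) /= eq_mod.
wlog le_kk' : k l k' l' eq_mod / k <= k'.
  move=> wlog_le; case: (leqP k k') => [le | /ltnW le]; first exact: wlog_le.
  by symmetry; apply: wlog_le (esym eq_mod) le.
have lt_Pk' := prefix_x_lt (ltn_ord k').
have lt_Ql := prefix_y_lt (ltn_ord l); have lt_Ql' := prefix_y_lt (ltn_ord l').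
have := sum_take_cat a tx le_kk' => Pkk'.
have [lt_A lt_B] : P k + (S - Q l) < 2 * S /\ P k' + (S - Q l') < 2 * S.
  by clear eq_mod; lia.
case: (eq_modn_cases lt_A lt_B eq_mod) => {eq_mod} [eq_AB | [eq_A | eq_B]].
- have [|/val_inj -> /val_inj ->] // := prefix_sums_eq le_kk' (ltn_ord k') (ltn_ord l) (ltn_ord l').
  lia.
- lia.
- by case: (@prefix_sums_no_wrap k k' l l' (ltn_ord k') (ltn_ord l)); lia.
Qed.

End MinimalSolution.

Local Open Scope ring_scope.

Lemma sum_pair (V : nmodType) (I J : finType) (F : I * J -> V) :
  \sum_p F p = \sum_i \sum_j F (i, j).
Proof. by rewrite pair_bigA; apply: eq_bigr => -[]. Qed.

Section ConicCaratheodory.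

Variables (F : realFieldType) (I : finType) (d r : nat).
Variables (g : I -> 'rV[F]_d) (U : 'M[F]_(r, d)).
Hypothesis g_sub : forall p, (g p <= U)%MS.

Lemma linear_dependence_in (A : {pred I}) : (\rank U < #|A|)%N ->
  exists mu : I -> F,
    [/\ exists p, mu p != 0, {subset support mu <= A} & \sum_p mu p *: g p = 0].
Proof.
move=> ltUA; pose M := \matrix_(k < #|A|) g (enum_val k).
have : kermx M != 0.
  rewrite -mxrank_eq0 mxrank_ker subn_eq0 -ltnNge (leq_ltn_trans _ ltUA) //.
  by apply/mxrankS/row_subP => k; rewrite rowK.
rewrite -nz_row_eq0; set u := nz_row _ => u_neq0.
have uM : u *m M = 0 by apply/sub_kermxP/nz_row_sub.
exists (fun p => \sum_(k | enum_val k == p) u 0 k); split.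
- have [k uk] : exists k, u 0 k != 0.
    apply/existsP; apply: contraR u_neq0; rewrite negb_exists => /forallP u0.
    by apply/eqP/rowP => k; rewrite mxE; apply/eqP/negbNE.
  exists (enum_val k); under eq_bigl do rewrite (inj_eq enum_val_inj).
  by rewrite big_pred1_eq.
- move=> p; rewrite supportE; apply: contraNT => pNA.
  by rewrite big_pred0 // => k; apply: contraNF pNA => /eqP <-; exact: enum_valP.
rewrite -[RHS]uM mulmx_sum_row [RHS](partition_big (@enum_val _ A) predT) //=.
apply: eq_bigr => p _; rewrite scaler_suml.
by apply: eq_bigr => k /eqP <-; rewrite rowK.
Qed.

Lemma exists_gt0_of_sumr_ge0 (mu : I -> F) p0 :
  mu p0 != 0 -> 0 <= \sum_p mu p -> exists p, 0 < mu p.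
Proof.
move=> mu_p0 sum_ge0; have [p /= mu_p | mu_le0] := pickP (fun p => 0 < mu p).
  by exists p.
have Nmu_ge0 p : 0 <= - mu p by rewrite oppr_ge0 leNgt mu_le0.
have sumN0 : \sum_p - mu p = 0.
  by apply/eqP; rewrite eq_le sumr_ge0 ?andbT // sumrN oppr_le0.
by move: mu_p0; rewrite -oppr_eq0 (psumr_eq0P (fun p _ => Nmu_ge0 p) sumN0) ?eqxx.
Qed.

Lemma caratheodory_step (lam : I -> F) : (forall p, 0 <= lam p) ->
  (\rank U < #|support lam|)%N ->
  exists lam' : I -> F, [/\ forall p, 0 <= lam' p,
    \sum_p lam' p *: g p = \sum_p lam p *: g p, \sum_p lam' p <= \sum_p lam p
    & (#|support lam'| < #|support lam|)%N].
Proof.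
move=> lam_ge0 lt_rank.
have [mu0 [[p0 mu0_p0] mu0_supp mu0_g]] := linear_dependence_in lt_rank.
have [mu [mu_p0 mu_supp mu_g mu_sum]] : exists mu : I -> F, [/\ mu p0 != 0,
    {subset support mu <= support lam}, \sum_p mu p *: g p = 0 & 0 <= \sum_p mu p].
  case: (lerP 0 (\sum_p mu0 p)) => [ge0 | lt0]; first by exists mu0.
  exists (fun p => - mu0 p); split; rewrite ?oppr_eq0 //.
  - by move=> p; rewrite supportE oppr_eq0; exact: mu0_supp.
  - by under eq_bigr do rewrite scaleNr; rewrite sumrN mu0_g oppr0.
  - by rewrite sumrN oppr_ge0 ltW.
have [p1 mu_p1] := exists_gt0_of_sumr_ge0 mu_p0 mu_sum.
(* The largest step along -mu that keeps lam nonnegative. *)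
case: (@arg_minP _ F _ p1 [pred q | 0 < mu q] (fun q => lam q / mu q) mu_p1).
move=> p /= mu_p p_min; set t := lam p / mu p.
have t_ge0 : 0 <= t := divr_ge0 (lam_ge0 p) (ltW mu_p).
exists (fun q => lam q - t * mu q); split.
- move=> q; rewrite subr_ge0; case: (ltrP 0 (mu q)) => [mu_q | mu_q].
    by rewrite -ler_pdivlMr // p_min.
  exact: le_trans (mulr_ge0_le0 t_ge0 mu_q) (lam_ge0 q).
- under eq_bigr do rewrite scalerBl -scalerA.
  by rewrite sumrB -scaler_sumr mu_g scaler0 subr0.
- by rewrite sumrB -mulr_sumr lerBlDr lerDl mulr_ge0.
have p_supp : p \in support lam by apply: mu_supp; rewrite supportE gt_eqF.
rewrite [#|support lam|](cardD1 p) p_supp add1n ltnS.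
apply/subset_leq_card/subsetP => q; rewrite supportE inE supportE /=.
apply: contraR; rewrite negb_and !negbK => /orP[/eqP -> | lam_q].
  by rewrite /t divfK ?subrr // gt_eqF.
have /negPn/eqP -> : q \notin support mu by apply: contraL lam_q; exact: mu_supp.
by rewrite (eqP lam_q) mulr0 subrr.
Qed.

Theorem conic_caratheodory (lam : I -> F) : (forall p, 0 <= lam p) ->
  exists lam' : I -> F, [/\ forall p, 0 <= lam' p,
    \sum_p lam' p *: g p = \sum_p lam p *: g p, \sum_p lam' p <= \sum_p lam p
    & (#|support lam'| <= \rank U)%N].
Proof.
have [k] := ubnP #|support lam|; elim: k lam => // k IHk lam lt_supp lam_ge0.
case: (leqP #|support lam| (\rank U)) => [le_rank | lt_rank]; first by exists lam.
have [lam1 [lam1_ge0 lam1_g lam1_sum lt_supp1]] := caratheodory_step lam_ge0 lt_rank.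
have [|lam2 [lam2_ge0 lam2_g lam2_sum le_rank]] := IHk lam1 _ lam1_ge0.
  by apply: leq_trans lt_supp1 _; rewrite -ltnS.
by exists lam2; split; rewrite ?lam2_g ?(le_trans lam2_sum).
Qed.

End ConicCaratheodory.

Section ProductCombination.

Variables (R : realFieldType) (n m : nat) (a : 'I_n -> nat) (b : 'I_m -> nat).
Variables (x : 'I_n -> nat) (y : 'I_m -> nat).

Local Notation S := (\sum_i x i * a i)%N.

Definition product_combination (p : 'I_n * 'I_m) : R := (x p.1 * y p.2)%:R / S%:R.

Hypotheses (xy_sol : is_solution a b x y) (S_gt0 : (0 < S)%N).

Let S_neq0 : S%:R != 0 :> R.
Proof. by rewrite pnatr_eq0 -lt0n. Qed.

Lemma sum_product_combination :
  \sum_p product_combination p = ((\sum_i x i) * (\sum_j y j))%:R / S%:R.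
Proof.
rewrite -mulr_suml sum_pair natrM !natr_sum big_distrlr /=; congr (_ / _).
by apply: eq_bigr => i _; apply: eq_bigr => j _; rewrite natrM.
Qed.

Lemma row_sum_product_combination i :
  \sum_j product_combination (i, j) * (b j)%:R = (x i)%:R.
Proof.
rewrite /product_combination /=; under eq_bigr do rewrite mulrAC -natrM -mulnA natrM.
by rewrite -mulr_suml -mulr_sumr -natr_sum -xy_sol mulfK.
Qed.

Lemma col_sum_product_combination j :
  \sum_i product_combination (i, j) * (a i)%:R = (y j)%:R.
Proof.
rewrite /product_combination /=; under eq_bigr do rewrite mulrAC -natrM mulnAC natrM.
by rewrite -!mulr_suml -natr_sum [_ * (y j)%:R]mulrC mulfK.
Qed.

End ProductCombination.

Section Generators.

Variables (R : realFieldType) (n m : nat) (a : 'I_n -> nat) (b : 'I_m -> nat).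

Definition generator (p : 'I_n * 'I_m) : 'rV[R]_(n + m) :=
  row_mx ((b p.2)%:R *: delta_mx 0 p.1) ((a p.1)%:R *: delta_mx 0 p.2).

Lemma sum_generator_lshift (lam : 'I_n * 'I_m -> R) i :
  (\sum_p lam p *: generator p) 0 (lshift m i) = \sum_j lam (i, j) * (b j)%:R.
Proof.
rewrite summxE sum_pair (bigD1 i) //= [X in _ + X]big1 ?addr0 => [|i' ne_i'i].
  by apply: eq_bigr => j _; rewrite mxE row_mxEl !mxE !eqxx mulr1.
apply: big1 => j _.
by rewrite mxE row_mxEl !mxE [i == i']eq_sym (negbTE ne_i'i) andbF !mulr0.
Qed.

Lemma sum_generator_rshift (lam : 'I_n * 'I_m -> R) j :
  (\sum_p lam p *: generator p) 0 (rshift n j) = \sum_i lam (i, j) * (a i)%:R.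
Proof.
rewrite summxE sum_pair; apply: eq_bigr => i _.
rewrite (bigD1 j) //= [X in _ + X]big1 ?addr0 => [|j' ne_j'j].
  by rewrite mxE row_mxEr !mxE !eqxx mulr1.
by rewrite mxE row_mxEr !mxE [j == j']eq_sym (negbTE ne_j'j) andbF !mulr0.
Qed.

Definition weight_col : 'cV[R]_(n + m) := col_mx (\col_i (a i)%:R) (- \col_j (b j)%:R).

Lemma generator_in_kermx p : (generator p <= kermx weight_col)%MS.
Proof.
apply/sub_kermxP; rewrite mul_row_col -!scalemxAl -!rowE.
by apply/rowP => k; rewrite !mxE mulrN mulrC subrr.
Qed.

Lemma rank_kermx_weight_col i0 : (0 < a i0)%N ->
  (\rank (kermx weight_col) <= n + m - 1)%N.
Proof.
move=> a_i0; rewrite mxrank_ker; apply: leq_sub2l; rewrite lt0n mxrank_eq0.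
apply/eqP => /matrixP /(_ (lshift m i0) 0) /eqP.
by rewrite col_mxEu !mxE pnatr_eq0 (negbTE (lt0n_neq0 a_i0)).
Qed.

End Generators.

Theorem corollary2 (R : realFieldType) (n m : nat)
    (a : 'I_n -> nat) (b : 'I_m -> nat)
    (ha : forall i, (0 < a i)%N) (hb : forall j, (0 < b j)%N)
    (x : 'I_n -> nat) (y : 'I_m -> nat) :
  minimal_solution a b x y ->
  exists (lam0 : R) (lam : 'I_n -> 'I_m -> R),
    0 <= lam0 /\ (forall i j, 0 <= lam i j) /\
    lam0 + \sum_(i < n) \sum_(j < m) lam i j = 1 /\
    (forall i : 'I_n, (x i)%:R = \sum_(j < m) lam i j * (b j)%:R) /\
    (forall j : 'I_m, (y j)%:R = \sum_(i < n) lam i j * (a i)%:R) /\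
    (#|[set p : 'I_n * 'I_m | lam p.1 p.2 != 0%R]| <= m + n - 1)%N.
Proof.
move=> xy_min; have S_gt0 := minimal_solution_gt0 ha hb xy_min.
have [i0 _] := minimal_solution_exists_x_gt0 ha hb xy_min.
have lam0_ge0 p : 0 <= product_combination R a x y p by rewrite divr_ge0 ?ler0n.
have [lam [lam_ge0 lam_g lam_sum lam_supp]] :=
  conic_caratheodory (@generator_in_kermx R _ _ a b) lam0_ge0.
exists (1 - \sum_p lam p), (fun i j => lam (i, j)).
split; [|split; [|split; [|split; [|split]]]].
- rewrite subr_ge0 (le_trans lam_sum) // sum_product_combination ler_pdivrMr ?ltr0n //.
  by rewrite mul1r ler_nat (minimal_solution_sum_mul_sum_le ha hb xy_min).
- by move=> i j; exact: lam_ge0.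
- by rewrite -sum_pair subrK.
- move=> i; rewrite -(row_sum_product_combination R xy_min.1 S_gt0).
  by rewrite -!(@sum_generator_lshift R n m a b) lam_g.
- move=> j; rewrite -(col_sum_product_combination R y S_gt0).
  by rewrite -!(@sum_generator_rshift R n m a b) lam_g.
rewrite addnC (leq_trans _ (rank_kermx_weight_col R b (ha i0))) //.
rewrite (leq_trans _ lam_supp) //.
by apply/eq_leq; apply: eq_card => -[i j]; rewrite inE supportE.
Qed.
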